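(* Let $0\le s<r<n$, let $t\ge 4$ be an integer, and let $x$ be any vertex of $G(n,r,s)$. Then $$0\le\frac{\operatorname{hom}(C_t,G(n,r,s))-\operatorname{mon}(C_t,G(n,r,s))}{\operatorname{hom}(C_t,G(n,r,s))}\le t\sum_{k=2}^{t-2}\frac{P^k(x,x)\,P^{t-k}(x,x)}{P^t(x,x)}.$$
   Context: For integers $0\le s<r<n$, $G(n,r,s)$ is the simple graph whose vertices are the $r$-element subsets of $\{1,\dots,n\}$, with $x,y$ adjacent iff $|x\cap y|=s$; it is vertex-transitive and regular of degree $N_1=\binom{r}{s}\binom{n-r}{r-s}$. $C_t$ is the cycle on $t$ vertices; $\operatorname{hom}$ and $\operatorname{mon}$ count homomorphisms and injective homomorphisms. $P^k(x,y)$ denotes the $k$-step transition probability from $x$ to $y$ of the simple random walk on $G(n,r,s)$ (at each step move to a uniformly random neighbour of the current vertex). *)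

From mathcomp Require Import all_boot all_order all_algebra.
Set Implicit Arguments. Unset Strict Implicit. Unset Printing Implicit Defensive.
Import Order.TTheory GRing.Theory Num.Theory.

(* Vertices of G(n,r,s): r-element subsets of {1..n}, modelled as subsets of 'I_n. *)
Definition gvert (n r : nat) := {A : {set 'I_n} | #|A| == r}.

Definition gadj (n r s : nat) (x y : gvert n r) : bool :=
  #|val x :&: val y| == s.

(* hom(C_t, G): maps from the vertices 'I_t of the cycle C_t (i ~ i+1 mod t)
   sending every edge of C_t to an edge of G. *)
Definition homC (n r s t : nat) : nat :=
  #|[set f : {ffun 'I_t -> gvert n r} | [forall i : 'I_t, gadj s (f i) (f (ordS i))]]|.

Definition monC (n r s t : nat) : nat :=
  #|[set f : {ffun 'I_t -> gvert n r} |
      [forall i : 'I_t, gadj s (f i) (f (ordS i))] && injectiveb f]|.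

Definition gdeg (n r s : nat) (x : gvert n r) : nat := #|[set y | gadj s x y]|.

Definition trans (R : fieldType) (n r s : nat) (x y : gvert n r) : R :=
  (gadj s x y)%:R / (gdeg s x)%:R.

Fixpoint transk (R : fieldType) (n r s : nat) (k : nat) (x y : gvert n r) : R :=
  match k with
  | 0 => (x == y)%:R
  | k'.+1 => \sum_(z : gvert n r) trans R s x z * transk R s k' z y
  end.

From mathcomp Require Import all_boot all_order all_algebra.
From mathcomp Require Import zify ring.
Set Implicit Arguments. Unset Strict Implicit. Unset Printing Implicit Defensive.
Import Order.TTheory GRing.Theory Num.Theory.

(* hom(C_t, G) counts closed walks of length t; since G(n,r,s) is
   vertex-transitive (a relabelling of {1..n} moves any r-set to any other),
   it equals |V| a_t, where a_k is the number of closed k-walks at x.  A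
   non-injective homomorphism f has f i = f j for some positions i < j, and
   cutting at i and j splits it into two closed walks at f i of lengths j - i
   and t - (j - i); so there are at most |V| a_(j-i) a_(t-j+i) of them.  As G
   has no loops, a_1 = 0, so only gaps 2 <= k <= t - 2 contribute, each for at
   most t pairs.  Finally P^k(x,x) = a_k / d^k and the powers of the degree d
   cancel in the ratio. *)

Lemma sum_delta (T : finType) (y : T) (F : T -> nat) :
  \sum_w (y == w) * F w = F y.
Proof.
rewrite (bigD1 y) //= eqxx mul1n big1 ?addn0 // => w /negbTE.
by rewrite eq_sym => ->.
Qed.

Lemma sum_delta_r (T : finType) (z : T) (F : T -> nat) :
  \sum_w F w * (w == z) = F z.
Proof. by under eq_bigr do rewrite mulnC eq_sym; rewrite sum_delta. Qed.

Lemma nth_codom_ord (T : Type) n (z : T) (f : 'I_n -> T) (i : 'I_n) :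
  nth z (codom f) i = f i.
Proof. by rewrite codomE (nth_map i) ?size_enum_ord // nth_ord_enum. Qed.

Lemma card_set_sum (T : finType) (P : pred T) : #|[set x | P x]| = \sum_x P x.
Proof. by rewrite -sum1dep_card big_mkcond; apply: eq_bigr => x _; case: (P x). Qed.

Lemma nat_of_forall (I : finType) (P : pred I) :
  [forall i, P i] = \prod_i (P i : nat) :> nat.
Proof.
case: (boolP [forall i, P i]) => [/forallP allP | /forallPn[i /negbTE Pi]].
  by rewrite big1 // => i _; rewrite allP.
by rewrite (bigD1 i) //= Pi.
Qed.

Definition ffcons (T : finType) m (v : T) (g : {ffun 'I_m -> T}) :
    {ffun 'I_m.+1 -> T} :=
  [ffun i => if unlift ord0 i is Some j then g j else v].

Lemma codom_ffcons (T : finType) m (v : T) (g : {ffun 'I_m -> T}) :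
  codom (ffcons v g) = v :: codom g.
Proof.
rewrite !codomE enum_ordSl /= -map_comp ffunE unlift_none; congr (_ :: _).
by apply: eq_map => j; rewrite /= ffunE liftK.
Qed.

Lemma big_ffcons (T : finType) m (F : {ffun 'I_m.+1 -> T} -> nat) :
  \sum_f F f = \sum_(v : T) \sum_(g : {ffun 'I_m -> T}) F (ffcons v g).
Proof.
rewrite pair_big /= (reindex (fun p => ffcons p.1 p.2)) //.
exists (fun f : {ffun 'I_m.+1 -> T} => (f ord0, [ffun j => f (lift ord0 j)]))
  => [[v g] _ | f _].
  rewrite /ffcons /= !ffunE unlift_none; congr pair.
  by apply/ffunP => j; rewrite !ffunE liftK.
apply/ffunP => i; rewrite ffunE.
by case: unliftP => [j -> | ->]; rewrite ?ffunE.
Qed.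

Lemma card_noninjective_le (T : finType) t (P : pred {ffun 'I_t -> T}) :
  #|[set f | P f && ~~ injectiveb f]| <=
  \sum_(i < t) \sum_(j < t | i < j) \sum_f P f * (f i == f j).
Proof.
rewrite card_set_sum.
under [X in _ <= X]eq_bigr do rewrite exchange_big.
rewrite exchange_big; apply: leq_sum => f _.
case: (P f) => //=; case: injectivePn => //= -[i [j ne_ij eq_fij]].
wlog lt_ij : i j ne_ij eq_fij / i < j.
  move=> gen; case: (ltngtP i j) => [|lt_ji|/val_inj eq_ij]; first exact: gen.
    by apply: (gen j i); rewrite // eq_sym.
  by rewrite eq_ij eqxx in ne_ij.
by rewrite (bigD1 i) //= (bigD1 j) //= eq_fij eqxx -addnA.
Qed.

Lemma sum_pairs_gap_le (G : nat -> nat) t : 3 <= t -> G 1 = 0 -> G t.-1 = 0 ->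
  \sum_(i < t) \sum_(j < t | i < j) G (j - i) <= t * \sum_(2 <= k < t.-1) G k.
Proof.
move=> t_ge3 G1 Gt1.
have -> : \sum_(2 <= k < t.-1) G k = \sum_(1 <= k < t) G k.
  rewrite [RHS]big_ltn ?G1 //; last lia.
  by rewrite -{2}(ltn_predK t_ge3) big_nat_recr /= ?Gt1 ?addn0 //; lia.
rewrite -[X in _ <= X * _](card_ord t) -sum_nat_const; apply: leq_sum => i _.
rewrite (eq_bigl (fun j : 'I_t => xpredT j && (1 + i <= j))) //.
rewrite -(big_geq_mkord _ _ xpredT (fun j => G (j - i))) big_addn.
under eq_bigr do rewrite addnK.
rewrite [X in _ <= X](big_cat_nat (n := t - i)) ?leq_addr ?leq_subr //.
by rewrite subn_gt0.
Qed.

Lemma exists_inj_imset (T : finType) (X Y : {set T}) : #|X| = #|Y| ->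
  exists2 h : T -> T, injective h & h @: X = Y.
Proof.
move=> eq_XY.
pose lay (A : {set T}) := enum A ++ enum (~: A).
have lay_uniq A : uniq (lay A).
  rewrite cat_uniq !enum_uniq andbT /=; apply/hasPn => a.
  by rewrite !mem_enum in_setC => /negbTE ->.
have lay_mem A a : a \in lay A by rewrite mem_cat !mem_enum in_setC orbN.
have lay_size A : size (lay A) = #|T| by rewrite size_cat -!cardE cardsC.
have index_lt a : index a (lay X) < size (lay Y).
  by rewrite lay_size -(lay_size X) index_mem.
pose h a := nth a (lay Y) (index a (lay X)).
have inj_h : injective h.
  move=> a b; rewrite /h (set_nth_default b) // => /eqP.
  rewrite nth_uniq // => /eqP; exact: index_inj.
exists h => //; apply/eqP; rewrite eqEcard card_imset // eq_XY leqnn andbT.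
apply/subsetP => _ /imsetP[a Xa ->].
have lt_aY : index a (enum X) < #|Y| by rewrite -eq_XY cardE index_mem mem_enum.
rewrite /h /lay index_cat mem_enum Xa nth_cat -cardE lt_aY -mem_enum.
by rewrite mem_nth // -cardE.
Qed.

Section Walks.

Variables (T : finType) (e : rel T).

Fixpoint nwalk k (y z : T) : nat :=
  if k is k'.+1 then \sum_w e y w * nwalk k' w z else y == z.

Lemma nwalk0 y z : nwalk 0 y z = (y == z).
Proof. by []. Qed.

Lemma nwalkS k y z : nwalk k.+1 y z = \sum_w e y w * nwalk k w z.
Proof. by []. Qed.

Lemma nwalkD a b y z : nwalk (a + b) y z = \sum_w nwalk a y w * nwalk b w z.
Proof.
elim: a y => [|a IH] y; first by rewrite sum_delta.
rewrite addSn nwalkS; under eq_bigr do rewrite IH big_distrr.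
rewrite exchange_big; apply: eq_bigr => w _.
by rewrite nwalkS big_distrl; apply: eq_bigr => u _; exact: mulnA.
Qed.

Lemma nwalk_inj_hom (h : T -> T) k y z : injective h ->
    (forall a b, e (h a) (h b) = e a b) ->
  nwalk k (h y) (h z) = nwalk k y z.
Proof.
move=> inj_h hom_h; elim: k y => [|k IH] y; first by rewrite /= inj_eq.
by rewrite !nwalkS (reindex_inj inj_h); apply: eq_bigr => w _; rewrite hom_h IH.
Qed.

Lemma nwalkS_eq0 k (y z : T) :
  \sum_w e y w = 0 -> nwalk k.+1 y z = 0.
Proof.
move/eqP; rewrite sum_nat_eq0 => /forallP no_edge.
by rewrite nwalkS big1 // => w _; rewrite (eqP (implyP (no_edge w) isT)).
Qed.

(* The walk y, g 0, ..., g (m-1), z of length m.+1, read as a sequence. *)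
Definition walk_at m y (g : {ffun 'I_m -> T}) z j := nth z (y :: codom g) j.

Arguments walk_at : simpl never.

Definition walk_weight m y (g : {ffun 'I_m -> T}) z : nat :=
  \prod_(i < m.+1) e (walk_at y g z i) (walk_at y g z i.+1).

Lemma walk_at0 m y (g : {ffun 'I_m -> T}) z : walk_at y g z 0 = y.
Proof. by []. Qed.

Lemma walk_at_last m y (g : {ffun 'I_m -> T}) z : walk_at y g z m.+1 = z.
Proof. by rewrite /walk_at /= nth_default // size_codom card_ord. Qed.

Lemma walk_at_ffcons m y v (g : {ffun 'I_m -> T}) z j :
  walk_at y (ffcons v g) z j.+1 = walk_at v g z j.
Proof. by rewrite /walk_at /= codom_ffcons. Qed.

Lemma walk_weight_ffcons m y v (g : {ffun 'I_m -> T}) z :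
  walk_weight y (ffcons v g) z = e y v * walk_weight v g z.
Proof.
rewrite /walk_weight big_ord_recl walk_at_ffcons; congr (_ * _).
by apply: eq_bigr => i _; rewrite /= !walk_at_ffcons.
Qed.

Lemma sum_walk_weight m y z :
  \sum_(g : {ffun 'I_m -> T}) walk_weight y g z = nwalk m.+1 y z.
Proof.
elim: m y => [|m IH] y.
  rewrite (eq_bigr (fun _ => e y z : nat)) => [|g _]; last first.
    by rewrite /walk_weight big_ord1 walk_at_last.
  by rewrite sum_nat_const card_ffun card_ord expn0 mul1n nwalkS sum_delta_r.
rewrite big_ffcons nwalkS; apply: eq_bigr => v _.
by under eq_bigr do rewrite walk_weight_ffcons; rewrite -big_distrr IH.
Qed.

Lemma sum_walk_weight_at m a y w z : a <= m.+1 ->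
  \sum_(g : {ffun 'I_m -> T}) (walk_at y g z a == w) * walk_weight y g z
  = nwalk a y w * nwalk (m.+1 - a) w z.
Proof.
elim: a m y => [|a IH] m y le_a.
  under eq_bigr do rewrite walk_at0.
  rewrite -big_distrr sum_walk_weight subn0 nwalk0; by case: eqVneq => [->|].
case: m le_a => [|m] le_a.
  have -> : a = 0 by case: a le_a IH.
  under eq_bigr do rewrite walk_at_last.
  rewrite -big_distrr sum_walk_weight nwalk0 mulnC; by case: eqVneq => [->|].
rewrite big_ffcons nwalkS big_distrl /= subSS; apply: eq_bigr => v _.
under eq_bigr do rewrite walk_at_ffcons walk_weight_ffcons mulnCA.
by rewrite -big_distrr IH //; exact: mulnA.
Qed.

Lemma sum_walk_weight_at2 m a b y w1 w2 z : a <= b -> b <= m.+1 ->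
  \sum_(g : {ffun 'I_m -> T})
     (walk_at y g z a == w1) * ((walk_at y g z b == w2) * walk_weight y g z)
  = nwalk a y w1 * (nwalk (b - a) w1 w2 * nwalk (m.+1 - b) w2 z).
Proof.
elim: a b m y => [|a IH] b m y le_ab le_b.
  under eq_bigr do rewrite walk_at0.
  rewrite -big_distrr sum_walk_weight_at // subn0 nwalk0.
  by case: eqVneq => [->|].
case: (ltngtP b m.+1) le_b le_ab => // [lt_b | ->] _ le_ab; last first.
  under eq_bigr do rewrite walk_at_last mulnCA.
  rewrite -big_distrr /= sum_walk_weight_at // subnn nwalk0.
  by case: eqVneq => [->|]; rewrite ?mul1n ?muln1 ?mul0n ?muln0.
case: m b lt_b le_ab => [|m] [|b] // lt_b le_ab.
rewrite big_ffcons nwalkS big_distrl /= !subSS; apply: eq_bigr => v _.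
under eq_bigr do rewrite !walk_at_ffcons walk_weight_ffcons [X in _ * X]mulnCA mulnCA.
by rewrite -big_distrr (IH _ _ _ le_ab (ltnW lt_b)); exact: mulnA.
Qed.

Definition cycle_hom t (f : {ffun 'I_t -> T}) := [forall i, e (f i) (f (ordS i))].

Lemma ffcons_walk_at m v (g : {ffun 'I_m -> T}) z (i : 'I_m.+1) :
  ffcons v g i = walk_at v g z i.
Proof. by rewrite /walk_at -codom_ffcons nth_codom_ord. Qed.

Lemma ffcons_ordS m v (g : {ffun 'I_m -> T}) (i : 'I_m.+1) :
  ffcons v g (ordS i) = walk_at v g v i.+1.
Proof.
rewrite (ffcons_walk_at _ _ v) /=.
have := ltn_ord i; rewrite ltnS leq_eqVlt => /orP[/eqP-> | lt_im].
  by rewrite modnn walk_at_last.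
by rewrite modn_small.
Qed.

Lemma cycle_hom_ffcons m v (g : {ffun 'I_m -> T}) :
  cycle_hom (ffcons v g) = walk_weight v g v :> nat.
Proof.
rewrite nat_of_forall; apply: eq_bigr => i _.
by rewrite ffcons_ordS (ffcons_walk_at _ _ v).
Qed.

Lemma card_cycle_hom m :
  #|[set f : {ffun 'I_m.+1 -> T} | cycle_hom f]| = \sum_y nwalk m.+1 y y.
Proof.
rewrite card_set_sum big_ffcons; apply: eq_bigr => y _.
by under eq_bigr do rewrite cycle_hom_ffcons; rewrite sum_walk_weight.
Qed.

Lemma sum_cycle_hom_coincide m (i j : 'I_m.+1) : i < j ->
  \sum_(f : {ffun 'I_m.+1 -> T}) cycle_hom f * (f i == f j) =
  \sum_w nwalk (j - i) w w * nwalk (m.+1 - (j - i)) w w.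
Proof.
move=> lt_ij.
have eq_sum_delta (a b : T) : (a == b : nat) = \sum_w (a == w) * (b == w).
  by rewrite sum_delta eq_sym.
rewrite big_ffcons.
under eq_bigr => v _ do under eq_bigr => g _ do
  rewrite cycle_hom_ffcons !(ffcons_walk_at _ _ v) eq_sum_delta big_distrr.
under eq_bigr do rewrite exchange_big.
rewrite exchange_big; apply: eq_bigr => w _ /=.
under eq_bigr do under eq_bigr do rewrite mulnC -mulnA.
under eq_bigr do rewrite (sum_walk_weight_at2 _ _ _ _ (ltnW lt_ij) (ltnW (ltn_ord j))).
have -> : m.+1 - (j - i) = m.+1 - j + i by have := ltn_ord j; lia.
rewrite nwalkD big_distrr; apply: eq_bigr => v _ /=.
by rewrite mulnCA [nwalk i v w * _]mulnC.
Qed.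

Lemma card_noninjective_cycle_hom_le m : irreflexive e -> 3 <= m ->
  #|[set f : {ffun 'I_m.+1 -> T} | cycle_hom f && ~~ injectiveb f]| <=
  m.+1 * \sum_(2 <= k < m) \sum_w nwalk k w w * nwalk (m.+1 - k) w w.
Proof.
move=> irr_e m_ge3.
have nwalk1_diag w : nwalk 1 w w = 0 by rewrite nwalkS sum_delta_r irr_e.
apply: leq_trans (card_noninjective_le (@cycle_hom m.+1)) _.
under [X in X <= _]eq_bigr => i _ do
  under eq_bigr => j lt_ij do rewrite (sum_cycle_hom_coincide lt_ij).
apply: (sum_pairs_gap_le (G := fun k => \sum_w nwalk k w w * nwalk (m.+1 - k) w w)).
- exact: ltnW.
- by rewrite big1 // => w _; rewrite nwalk1_diag.
- by rewrite big1 // => w _; rewrite /= subSnn nwalk1_diag muln0.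
Qed.

End Walks.

Arguments nwalk {T} e k y z : simpl never.

Section JohnsonGraph.

Variables n r s : nat.

Definition relabel (h : 'I_n -> 'I_n) (A : gvert n r) : gvert n r :=
  insubd A (h @: val A).

Lemma relabelE h A : injective h -> val (relabel h A) = h @: val A.
Proof. by move=> inj_h; rewrite insubdK // unfold_in /= card_imset // (valP A). Qed.

Lemma relabel_inj h : injective h -> injective (relabel h).
Proof.
move=> inj_h A B eq_hAB; apply/val_inj/(imset_inj inj_h).
by rewrite -!relabelE // eq_hAB.
Qed.

Lemma gadj_relabel h A B : injective h ->
  gadj s (relabel h A) (relabel h B) = gadj s A B.
Proof.
move=> inj_h; rewrite /gadj !relabelE // -imsetI; last by move=> a b _ _; apply: inj_h.
by rewrite card_imset.
Qed.

Lemma gvert_transitive (x y : gvert n r) : exists2 h, injective h & relabel h x = y.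
Proof.
have [h inj_h hxy] : exists2 h : 'I_n -> 'I_n, injective h & h @: val x = val y.
  by apply: exists_inj_imset; rewrite (eqP (valP x)) (eqP (valP y)).
by exists h => //; apply: val_inj; rewrite relabelE.
Qed.

Lemma nwalk_gadj_diag k (x y : gvert n r) :
  nwalk (@gadj n r s) k y y = nwalk (@gadj n r s) k x x.
Proof.
have [h inj_h <-] := gvert_transitive x y.
by apply: nwalk_inj_hom => [|a b]; [exact: relabel_inj | exact: gadj_relabel].
Qed.

Lemma gdeg_const (x y : gvert n r) : gdeg s y = gdeg s x.
Proof.
have [h inj_h <-] := gvert_transitive x y.
rewrite /gdeg !card_set_sum (reindex_inj (relabel_inj inj_h)).
by apply: eq_bigr => z _; rewrite gadj_relabel.
Qed.

Lemma gadj_irreflexive : s < r -> irreflexive (@gadj n r s).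
Proof. by move=> lt_sr x; rewrite /gadj setIid (eqP (valP x)) gtn_eqF. Qed.

Lemma homCE m (x : gvert n r) :
  homC n r s m.+1 = #|{: gvert n r}| * nwalk (@gadj n r s) m.+1 x x.
Proof.
rewrite [LHS](card_cycle_hom (@gadj n r s) m).
by under eq_bigr do rewrite (nwalk_gadj_diag _ x); rewrite sum_nat_const.
Qed.

Lemma monC_le_homC t : monC n r s t <= homC n r s t.
Proof. by apply/subset_leq_card/subsetP => f; rewrite !inE => /andP[]. Qed.

Lemma homC_sub_monC_le m (x : gvert n r) : s < r -> 3 <= m ->
  homC n r s m.+1 - monC n r s m.+1 <=
  m.+1 * (#|{: gvert n r}| * \sum_(2 <= k < m)
            nwalk (@gadj n r s) k x x * nwalk (@gadj n r s) (m.+1 - k) x x).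
Proof.
move=> lt_sr m_ge3.
set homs := [set f : {ffun 'I_m.+1 -> gvert n r} | cycle_hom (@gadj n r s) f].
set injs := [set f : {ffun 'I_m.+1 -> gvert n r} | injectiveb f].
have -> : monC n r s m.+1 = #|homs :&: injs| by apply: eq_card => f; rewrite !inE.
rewrite -[homC _ _ _ _](cardsID injs homs) addKn.
have -> : homs :\: injs =
          [set f | cycle_hom (@gadj n r s) f && ~~ injectiveb f].
  by apply/setP => f; rewrite !inE andbC.
apply: leq_trans (card_noninjective_cycle_hom_le (gadj_irreflexive lt_sr) m_ge3) _.
rewrite eq_leq //; congr (m.+1 * _); rewrite big_distrr; apply: eq_bigr => k _ /=.
by under eq_bigr do rewrite !(nwalk_gadj_diag _ x); rewrite sum_nat_const.
Qed.

End JohnsonGraph.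

Local Open Scope ring_scope.

Lemma transk_nwalk (R : fieldType) n r s k (x y z : gvert n r) :
  transk R s k y z = (nwalk (@gadj n r s) k y z)%:R / (gdeg s x)%:R ^+ k.
Proof.
elim: k y => [|k IH] y; first by rewrite /= divr1.
rewrite /= nwalkS natr_sum exprS invfM mulr_suml; apply: eq_bigr => w _.
by rewrite /trans IH (gdeg_const s x y) natrM mulrACA.
Qed.

Lemma transk_return_ratio (R : numFieldType) n r s t k (x : gvert n r) :
  (0 < t)%N -> (k <= t)%N ->
  transk R s k x x * transk R s (t - k) x x / transk R s t x x =
  (nwalk (@gadj n r s) k x x * nwalk (@gadj n r s) (t - k) x x)%:R /
    (nwalk (@gadj n r s) t x x)%:R.
Proof.
move=> t_gt0 le_kt; rewrite !(transk_nwalk _ _ _ x); set d := (gdeg s x)%:R.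
(* If a_t = 0, then P^t(x,x) = 0 too and both sides are x / 0 = 0. *)
have [-> | a_nz] := eqVneq (nwalk (@gadj n r s) t x x) 0%N.
  by rewrite mul0r !invr0 !mulr0.
have d_nz : d != 0.
  rewrite pnatr_eq0; apply: contra a_nz => /eqP d0.
  by rewrite -(prednK t_gt0) nwalkS_eq0 // -card_set_sum.
have -> : d ^+ t = d ^+ k * d ^+ (t - k) by rewrite -exprD subnKC.
by rewrite natrM; field; rewrite !expf_neq0 // pnatr_eq0 a_nz.
Qed.

Lemma ler_natB_div (R : numFieldType) (h l N a c S : nat) :
  (l <= h)%N -> h = (N * a)%N -> (0 < N)%N -> (h - l <= c * (N * S))%N ->
  (h%:R - l%:R) / h%:R <= c%:R * S%:R / a%:R :> R.
Proof.
move=> le_lh h_eq N_gt0 bound; subst h; rewrite -natrB //.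
have [-> | a_nz] := eqVneq a 0%N; first by rewrite muln0 !invr0 !mulr0.
apply: (le_trans (y := (c * (N * S))%:R / (N * a)%:R)).
  by rewrite ler_wpM2r ?invr_ge0 ?ler0n ?ler_nat.
rewrite le_eqVlt; apply/orP; left; apply/eqP.
by rewrite !natrM; field; rewrite !pnatr_eq0 a_nz -lt0n N_gt0.
Qed.

Unset Implicit Arguments.

Theorem mainTheorem4 (R : realFieldType) (n r s t : nat) (x : gvert n r) :
  (s < r)%N -> (r < n)%N -> (4 <= t)%N ->
  let hom := (homC n r s t)%:R : R in
  let mon := (monC n r s t)%:R : R in
  0 <= (hom - mon) / hom /\
  (hom - mon) / hom <=
    t%:R * \sum_(2 <= k < t.-1)
      (transk R s k x x * transk R s (t - k) x x / transk R s t x x).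
Proof.
move=> lt_sr _ t_ge4 hom mon.
have [m t_eq] : exists m, t = m.+1.
  by exists t.-1; rewrite prednK // (ltn_trans _ t_ge4).
have m_ge3 : (3 <= m)%N by rewrite -ltnS -t_eq.
subst t; split.
  by rewrite divr_ge0 ?subr_ge0 ?ler_nat ?monC_le_homC.
rewrite big_nat_cond.
under eq_bigr => k /andP[/andP[_ lt_km] _] do
  rewrite (transk_return_ratio _ _ _ (ltn0Sn m) (leqW (ltnW lt_km))).
rewrite -big_nat_cond -mulr_suml -natr_sum mulrA.
apply: ler_natB_div (monC_le_homC n r s m.+1) (homCE s m x) _
  (homC_sub_monC_le x lt_sr m_ge3).
by apply/card_gt0P; exists x.
Qed.
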